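(* Let $(c_{i,j})_{0\le i,j\le 3}$ be real numbers satisfying the averaging equation (E0) and the regularity equations (R1)–(R9). Let $$L=\begin{pmatrix} c_{1,1}&c_{0,1}&c_{1,0}&c_{0,0}\\ c_{3,1}&c_{2,1}&c_{3,0}&c_{2,0}\\ c_{1,3}&c_{0,3}&c_{1,2}&c_{0,2}\\ c_{3,3}&c_{2,3}&c_{3,2}&c_{2,2}\end{pmatrix}.$$ Then the eigenvalues of $L$, counted with algebraic multiplicity, are $1$, $\tfrac12$, $\tfrac12$, and $c_{2,2}+c_{3,3}-c_{3,2}-c_{2,3}$.
   Context: (E0): $\sum_{i=0}^3\sum_{j=0}^3 c_{i,j}=4$. Regularity equations: (R1) $c_{0,1}+c_{0,3}+c_{2,1}+c_{2,3}=c_{0,0}+c_{0,2}+c_{2,0}+c_{2,2}$; (R2) $c_{1,1}+c_{1,3}+c_{3,1}+c_{3,3}=c_{0,0}+c_{0,2}+c_{2,0}+c_{2,2}$; (R3) $c_{1,0}+c_{1,2}+c_{3,0}+c_{3,2}=c_{0,0}+c_{0,2}+c_{2,0}+c_{2,2}$; (R4) $c_{2,1}+c_{2,3}=c_{2,0}+c_{2,2}$; (R5) $c_{1,1}+c_{1,3}+3c_{3,1}+3c_{3,3}=2c_{2,0}+2c_{2,2}$; (R6) $c_{1,0}+c_{1,2}+3c_{3,0}+3c_{3,2}=2c_{2,0}+2c_{2,2}$; (R7) $c_{0,1}+c_{2,1}+3c_{0,3}+3c_{2,3}=2c_{0,2}+2c_{2,2}$; (R8) $c_{1,1}+c_{3,1}+3c_{1,3}+3c_{3,3}=2c_{0,2}+2c_{2,2}$;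 (R9) $c_{1,2}+c_{3,2}=c_{0,2}+c_{2,2}$. *)

From HB Require Import structures.
From mathcomp Require Import all_boot all_order all_algebra.
Set Implicit Arguments. Unset Strict Implicit. Unset Printing Implicit Defensive.
Import Order.TTheory GRing.Theory Num.Theory.
Local Open Scope ring_scope.

Definition cc {R : ringType} (c : 'M[R]_4) (i j : nat) : R := c (inord i) (inord j).

(* The matrix L of the paper:
     row 0: c11 c01 c10 c00
     row 1: c31 c21 c30 c20
     row 2: c13 c03 c12 c02
     row 3: c33 c23 c32 c22
   i.e. L_{r,s} = c_{2(r mod 2) + (1 - s mod 2), 2(r div 2) + (1 - s div 2)}. *)
Definition Lmat {R : ringType} (c : 'M[R]_4) : 'M[R]_4 :=
  \matrix_(r < 4, s < 4)
     cc c (2 * (r %% 2) + (1 - s %% 2))%N (2 * (r %/ 2) + (1 - s %/ 2))%N.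

From HB Require Import structures.
From mathcomp Require Import all_boot all_order all_algebra lra.
Set Implicit Arguments.
Unset Strict Implicit.
Unset Printing Implicit Defensive.

Import Order.TTheory GRing.Theory Num.Theory.
Local Open Scope ring_scope.

(* Index the columns of [Lmat c] by the points (s mod 2, s div 2) of {0,1}^2 and
   let the rows of [monomial_mx] be the monomials 1, x, y, xy evaluated at these
   points.  (E0) and (R1)-(R3) say that every column of L sums to 1, so 1 L = 1,
   and (R4)-(R9) say that x L = x/2 and y L = y/2 up to multiples of 1.  So in the
   monomial basis v |-> v L is lower triangular, with diagonal 1, 1/2, 1/2 and the
   coefficient c22 + c33 - c32 - c23 of xy in (xy) L; similar matrices have the
   same characteristic polynomial. *)

Lemma char_poly_similar (R : comUnitRingType) n (P A B : 'M[R]_n) :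
  P \in unitmx -> P *m A = B *m P -> char_poly A = char_poly B.
Proof.
rewrite unitmxE => unitP PA_BP.
pose PX := map_mx (@polyC R) P.
have PX_char : PX *m char_poly_mx A = char_poly_mx B *m PX.
  rewrite /char_poly_mx mulmxBr mulmxBl -!map_mxM PA_BP.
  by rewrite mul_mx_scalar mul_scalar_mx.
have := congr1 determinant PX_char.
rewrite !det_mulmx det_map_mx [X in _ = X]mulrC => /(congr1 ( *%R (\det P)^-1%:P)).
by rewrite /= !mulrA -polyCM mulVr // !mul1r.
Qed.

Definition monomial_mx {R : nzRingType} : 'M[R]_4 :=
  \matrix_(r < 4, s < 4) ((s %% 2) ^ (r %% 2) * (s %/ 2) ^ (r %/ 2))%:R.

Lemma det_monomial_mx (R : comNzRingType) : \det (@monomial_mx R) = 1.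
Proof.
rewrite -det_tr det_trig; last first.
  by apply/is_trig_mxP => -[[|[|[|[|//]]]] ?] [[|[|[|[|//]]]] ?]; rewrite !mxE.
by rewrite !big_ord_recl big_ord0 !mxE /= !mul1r.
Qed.

Lemma monomial_mx_unit (R : comUnitRingType) : @monomial_mx R \in unitmx.
Proof. by rewrite unitmxE det_monomial_mx unitr1. Qed.

Definition Lmat_in_monomials {R : fieldType} (c : 'M[R]_4) : 'M[R]_4 :=
  \matrix_(r < 4, s < 4)
  match nat_of_ord r, nat_of_ord s with
  | 0, 0 => 1
  | 1, 0 => cc c 2 1 + cc c 2 3 - 2^-1
  | 1, 1 => 2^-1
  | 2, 0 => cc c 1 2 + cc c 3 2 - 2^-1
  | 2, 2 => 2^-1
  | 3, 0 => cc c 3 3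
  | 3, 1 => cc c 2 3 - cc c 3 3
  | 3, 2 => cc c 3 2 - cc c 3 3
  | 3, 3 => cc c 2 2 + cc c 3 3 - cc c 3 2 - cc c 2 3
  | _, _ => 0
  end.

Lemma Lmat_in_monomials_trig (R : fieldType) (c : 'M[R]_4) :
  is_trig_mx (Lmat_in_monomials c).
Proof. by apply/is_trig_mxP => -[[|[|[|[|//]]]] ?] [[|[|[|[|//]]]] ?]; rewrite mxE. Qed.

Section Regularity.

Variables (R : realFieldType) (c : 'M[R]_4).
Hypotheses
  (E0 : \sum_(i < 4) \sum_(j < 4) c i j = 4)
  (R1 : cc c 0 1 + cc c 0 3 + cc c 2 1 + cc c 2 3 = cc c 0 0 + cc c 0 2 + cc c 2 0 + cc c 2 2)
  (R2 : cc c 1 1 + cc c 1 3 + cc c 3 1 + cc c 3 3 = cc c 0 0 + cc c 0 2 + cc c 2 0 + cc c 2 2)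
  (R3 : cc c 1 0 + cc c 1 2 + cc c 3 0 + cc c 3 2 = cc c 0 0 + cc c 0 2 + cc c 2 0 + cc c 2 2)
  (R4 : cc c 2 1 + cc c 2 3 = cc c 2 0 + cc c 2 2)
  (R5 : cc c 1 1 + cc c 1 3 + 3 * cc c 3 1 + 3 * cc c 3 3 = 2 * cc c 2 0 + 2 * cc c 2 2)
  (R6 : cc c 1 0 + cc c 1 2 + 3 * cc c 3 0 + 3 * cc c 3 2 = 2 * cc c 2 0 + 2 * cc c 2 2)
  (R7 : cc c 0 1 + cc c 2 1 + 3 * cc c 0 3 + 3 * cc c 2 3 = 2 * cc c 0 2 + 2 * cc c 2 2)
  (R8 : cc c 1 1 + cc c 3 1 + 3 * cc c 1 3 + 3 * cc c 3 3 = 2 * cc c 0 2 + 2 * cc c 2 2)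
  (R9 : cc c 1 2 + cc c 3 2 = cc c 0 2 + cc c 2 2).

Lemma sum_cc : \sum_(i < 4) \sum_(j < 4) cc c i j = 4.
Proof.
rewrite -E0; apply: eq_bigr => i _; apply: eq_bigr => j _.
by rewrite /cc !inord_val.
Qed.

Lemma monomial_mx_Lmat :
  monomial_mx *m Lmat c = Lmat_in_monomials c *m monomial_mx.
Proof.
move: sum_cc; rewrite !big_ord_recl !big_ord0 => csum.
(* At a concrete entry, [cbv] evaluates the index arithmetic of [Lmat] and
   [monomial_mx]; the hypotheses are moved to the goal so that they are
   normalized alike. *)
apply/matrixP => -[[|[|[|[|//]]]] ?] [[|[|[|[|//]]]] ?];
  move: csum R1 R2 R3 R4 R5 R6 R7 R8 R9; rewrite !mxE !big_ord_recl !big_ord0 !mxE;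
  cbv [lift bump leq modn modn_rec divn edivn edivn_rec
       subn Nat.sub addn Nat.add muln Nat.mul expn iterop iter];
  simpl; lra.
Qed.

End Regularity.

Theorem mainTheorem7 (R : realFieldType) (c : 'M[R]_4) :
  \sum_(i < 4) \sum_(j < 4) c i j = 4 ->
  cc c 0 1 + cc c 0 3 + cc c 2 1 + cc c 2 3 = cc c 0 0 + cc c 0 2 + cc c 2 0 + cc c 2 2 ->
  cc c 1 1 + cc c 1 3 + cc c 3 1 + cc c 3 3 = cc c 0 0 + cc c 0 2 + cc c 2 0 + cc c 2 2 ->
  cc c 1 0 + cc c 1 2 + cc c 3 0 + cc c 3 2 = cc c 0 0 + cc c 0 2 + cc c 2 0 + cc c 2 2 ->
  cc c 2 1 + cc c 2 3 = cc c 2 0 + cc c 2 2 ->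
  cc c 1 1 + cc c 1 3 + 3 * cc c 3 1 + 3 * cc c 3 3 = 2 * cc c 2 0 + 2 * cc c 2 2 ->
  cc c 1 0 + cc c 1 2 + 3 * cc c 3 0 + 3 * cc c 3 2 = 2 * cc c 2 0 + 2 * cc c 2 2 ->
  cc c 0 1 + cc c 2 1 + 3 * cc c 0 3 + 3 * cc c 2 3 = 2 * cc c 0 2 + 2 * cc c 2 2 ->
  cc c 1 1 + cc c 3 1 + 3 * cc c 1 3 + 3 * cc c 3 3 = 2 * cc c 0 2 + 2 * cc c 2 2 ->
  cc c 1 2 + cc c 3 2 = cc c 0 2 + cc c 2 2 ->
  char_poly (Lmat c) =
    ('X - 1%:P) * ('X - (1 / 2 : R)%:P) ^+ 2 *
    ('X - (cc c 2 2 + cc c 3 3 - cc c 3 2 - cc c 2 3)%:P).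
Proof.
move=> E0 R1 R2 R3 R4 R5 R6 R7 R8 R9.
have similar := monomial_mx_Lmat E0 R1 R2 R3 R4 R5 R6 R7 R8 R9.
rewrite (char_poly_similar (monomial_mx_unit R) similar).
rewrite char_poly_trig ?Lmat_in_monomials_trig //.
by rewrite !big_ord_recr big_ord0 !mxE /= mul1r div1r expr2 !mulrA.
Qed.
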